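(* Let $d\ge1$, $m,c>0$, and let $p,p_*,\hat p',\hat p'_*\in\mathbb{R}^d$ with associated energies $p_0=\sqrt{(mc)^2+|p|^2}$, $p_{0*}=\sqrt{(mc)^2+|p_*|^2}$, $\hat p_0'=\sqrt{(mc)^2+|\hat p'|^2}$, $\hat p_{0*}'=\sqrt{(mc)^2+|\hat p'_*|^2}$ satisfy the conservation laws \[ p+p_*=\hat p'+\hat p'_*\quad\text{and}\quad p_0+p_{0*}=\hat p_0'+\hat p_{0*}'. \] Then there exists $\omega\in S^{d-1}$ such that \[ \hat p'=\frac{p+p_*}{2}+\frac g2\Big(I_d+(\rho-1)\frac{v\otimes v}{|v|^2}\Big)\omega,\qquad \hat p'_*=\frac{p+p_*}{2}-\frac g2\Big(I_d+(\rho-1)\frac{v\otimes v}{|v|^2}\Big)\omega, \] and \[ \hat p_0'=\frac{p_0+p_{0*}}{2}+\frac g2\,\frac{p+p_*}{\sqrt s}\cdot\omega,\qquad \hat p_{0*}'=\frac{p_0+p_{0*}}{2}-\frac g2\,\frac{p+p_*}{\sqrt s}\cdot\omega. \]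
   Context: $s=(p_0+p_{0*})^2-|p+p_*|^2$, $g=\sqrt{|p-p_*|^2-(p_0-p_{0*})^2}$, $v=\frac{p+p_*}{p_0+p_{0*}}$, $\rho=\frac{p_0+p_{0*}}{\sqrt s}$; when $v=0$ (so $\rho=1$) the term $(\rho-1)\frac{v\otimes v}{|v|^2}$ is interpreted as $0$. *)

From mathcomp Require Import all_boot all_order all_algebra.
Set Implicit Arguments. Unset Strict Implicit. Unset Printing Implicit Defensive.
Import Order.TTheory GRing.Theory Num.Theory.
Local Open Scope ring_scope.

Section Defs.
Variable R : rcfType.
Variable d : nat.

Definition dotv (u w : 'cV[R]_d) : R := \sum_(i < d) u i 0 * w i 0.
Definition norm2 (u : 'cV[R]_d) : R := dotv u u.
Definition normv (u : 'cV[R]_d) : R := Num.sqrt (norm2 u).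

Definition energy (m c : R) (p : 'cV[R]_d) : R := Num.sqrt ((m * c) ^+ 2 + norm2 p).

Definition s_inv (m c : R) (p ps : 'cV[R]_d) : R :=
  (energy m c p + energy m c ps) ^+ 2 - norm2 (p + ps).
Definition g_rel (m c : R) (p ps : 'cV[R]_d) : R :=
  Num.sqrt (norm2 (p - ps) - (energy m c p - energy m c ps) ^+ 2).
Definition v_vel (m c : R) (p ps : 'cV[R]_d) : 'cV[R]_d :=
  (energy m c p + energy m c ps)^-1 *: (p + ps).
Definition rho_fac (m c : R) (p ps : 'cV[R]_d) : R :=
  (energy m c p + energy m c ps) / Num.sqrt (s_inv m c p ps).

(* I_d + (rho - 1) (v ⊗ v)/|v|^2, with the second term read as 0 when v = 0 *)
Definition Lambda (m c : R) (p ps : 'cV[R]_d) : 'M[R]_d :=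
  let v := v_vel m c p ps in
  1%:M + (if v == 0 then 0
          else ((rho_fac m c p ps - 1) / norm2 v) *: (v *m v^T)).
End Defs.

(* Write hp = P/2 + q and hps = P/2 - q with P = p + ps, and let E = p0 + p0s.
   Since hp0^2 - hps0^2 = |hp|^2 - |hps|^2 = 2 P.q, energy conservation forces
   the outgoing energies to be E/2 +- P.q/E.  As g^2 = s - 4(mc)^2 depends only
   on (E, P), computing it from the outgoing pair gives g^2/4 = |q|^2 - (P.q/E)^2.
   Finally Lambda is invertible, and its inverse maps q to a vector w of exactly
   that squared length with (P/sqrt s).w = P.q/E; so w = (g/2) omega for a unit
   vector omega. *)
From mathcomp Require Import all_boot all_order all_algebra.
From mathcomp Require Import ring lra.
Set Implicit Arguments. Unset Strict Implicit. Unset Printing Implicit Defensive.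
Import Order.TTheory GRing.Theory Num.Theory.
Local Open Scope ring_scope.

Lemma half_sum_diff (R : numFieldType) (V : lmodType R) (u w : V) :
  u = 2^-1 *: (u + w) + 2^-1 *: (u - w) /\ w = 2^-1 *: (u + w) - 2^-1 *: (u - w).
Proof.
have halfK (x : V) : 2^-1 *: (x *+ 2) = x.
  by rewrite -scaler_nat scalerA mulVf ?scale1r ?pnatr_eq0.
rewrite -scalerDr -scalerBr addrACA subrr addr0 opprB addrC addrA subrK.
by rewrite -!mulr2n !halfK.
Qed.

Section InnerProduct.
Variables (R : rcfType) (d : nat).
Implicit Types (u v w : 'cV[R]_d) (a : R).

Lemma dotvC u w : dotv u w = dotv w u.
Proof. by apply: eq_bigr => i _; rewrite mulrC. Qed.

Lemma dotvDl u v w : dotv (u + v) w = dotv u w + dotv v w.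
Proof. by rewrite /dotv -big_split; apply: eq_bigr => i _; rewrite mxE mulrDl. Qed.

Lemma dotvZl a u w : dotv (a *: u) w = a * dotv u w.
Proof. by rewrite /dotv mulr_sumr; apply: eq_bigr => i _; rewrite mxE mulrA. Qed.

Lemma dotvNl u w : dotv (- u) w = - dotv u w.
Proof. by rewrite -scaleN1r dotvZl mulN1r. Qed.

Lemma dotvBl u v w : dotv (u - v) w = dotv u w - dotv v w.
Proof. by rewrite dotvDl dotvNl. Qed.

Lemma dotvDr u v w : dotv w (u + v) = dotv w u + dotv w v.
Proof. by rewrite dotvC dotvDl !(dotvC w). Qed.

Lemma dotvZr a u w : dotv w (a *: u) = a * dotv w u.
Proof. by rewrite dotvC dotvZl dotvC. Qed.

Lemma dotvBr u v w : dotv w (u - v) = dotv w u - dotv w v.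
Proof. by rewrite dotvC dotvBl !(dotvC w). Qed.

Lemma dotv0l w : dotv 0 w = 0.
Proof. by rewrite -(scale0r 0) dotvZl mul0r. Qed.

Lemma norm2D u w : norm2 (u + w) = norm2 u + 2 * dotv u w + norm2 w.
Proof. by rewrite /norm2 !(dotvDl, dotvDr) (dotvC w u); ring. Qed.

Lemma norm2B u w : norm2 (u - w) = norm2 u - 2 * dotv u w + norm2 w.
Proof. by rewrite /norm2 !(dotvBl, dotvBr) (dotvC w u); ring. Qed.

Lemma norm2Z a u : norm2 (a *: u) = a ^+ 2 * norm2 u.
Proof. by rewrite /norm2 dotvZl dotvZr mulrA -expr2. Qed.

Lemma dotvDB u w : dotv (u + w) (u - w) = norm2 u - norm2 w.
Proof. by rewrite /norm2 dotvDl !dotvBr (dotvC w u); ring. Qed.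

Lemma norm2_ge0 u : 0 <= norm2 u.
Proof. by apply: sumr_ge0 => i _; rewrite -expr2 sqr_ge0. Qed.

Lemma norm2_eq0 u : (norm2 u == 0) = (u == 0).
Proof.
apply/eqP/eqP => [u0|->]; last exact: dotv0l.
apply/matrixP => i j; rewrite ord1 mxE.
have /eqP : u i 0 * u i 0 = 0.
  by apply: (psumr_eq0P _ u0) => // k _; rewrite -expr2 sqr_ge0.
by rewrite mulf_eq0 orbb => /eqP.
Qed.

Lemma norm2_gt0 u : (0 < norm2 u) = (u != 0).
Proof. by rewrite lt0r norm2_eq0 norm2_ge0 andbT. Qed.

Lemma sqr_dotv_le u w : dotv u w ^+ 2 <= norm2 u * norm2 w.
Proof.
have [->|u0] := eqVneq u 0; first by rewrite dotv0l /norm2 dotv0l expr0n mul0r.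
have := norm2_ge0 (norm2 u *: w - dotv u w *: u).
rewrite norm2B !norm2Z dotvZl dotvZr (dotvC w u).
have := norm2_gt0 u; rewrite u0; nra.
Qed.

Lemma mul_outer_mx u w : (u *m u^T) *m w = dotv u w *: u.
Proof.
rewrite -mulmxA -mul_mx_scalar; congr (_ *m _).
apply/matrixP => i j; rewrite !ord1 !mxE eqxx mulr1n.
by apply: eq_bigr => k _; rewrite mxE.
Qed.

Lemma normv_scale_unit w : (0 < d)%N ->
  exists o, norm2 o = 1 /\ w = normv w *: o.
Proof.
move=> d_gt0; have [->|w0] := eqVneq w 0.
  exists (delta_mx (Ordinal d_gt0) 0).
  rewrite /normv /norm2 dotv0l sqrtr0 scale0r; split=> //.
  rewrite /dotv (bigD1 (Ordinal d_gt0)) //= big1 ?addr0 ?mxE ?eqxx ?mulr1 //.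
  by move=> i /negbTE ni; rewrite !mxE ni mul0r.
have nw2 : normv w ^+ 2 = norm2 w by rewrite sqr_sqrtr ?norm2_ge0.
have nw0 : normv w != 0 by rewrite sqrtr_eq0 -ltNge norm2_gt0.
exists ((normv w)^-1 *: w); split; last by rewrite scalerA divff ?scale1r.
by rewrite norm2Z exprVn nw2 mulVf ?norm2_eq0.
Qed.

End InnerProduct.

Section Kinematics.
Variables (R : rcfType) (d : nat) (m c : R).
Hypothesis mc_gt0 : 0 < m * c.
Implicit Types x y : 'cV[R]_d.

Local Notation energy := (energy m c).

Lemma energy_sqr x : energy x ^+ 2 = (m * c) ^+ 2 + norm2 x.
Proof. by rewrite sqr_sqrtr // addr_ge0 ?sqr_ge0 ?norm2_ge0. Qed.

Lemma energy_gt0 x : 0 < energy x.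
Proof. by rewrite sqrtr_gt0 ltr_wpDr ?norm2_ge0 ?exprn_gt0. Qed.

Lemma dotv_lt_energy x y : dotv x y < energy x * energy y.
Proof.
have exy_gt0 := mulr_gt0 (energy_gt0 x) (energy_gt0 y).
have cs := sqr_dotv_le x y.
have K_gt0 : 0 < (m * c) ^+ 2 by rewrite exprn_gt0.
have : dotv x y ^+ 2 < (energy x * energy y) ^+ 2.
  rewrite exprMn !energy_sqr.
  have := norm2_ge0 x; have := norm2_ge0 y; nra.
nra.
Qed.

Lemma s_inv_gt0 x y : 0 < s_inv m c x y.
Proof.
rewrite /s_inv sqrrD !energy_sqr norm2D.
have := dotv_lt_energy x y; have := exprn_gt0 2 mc_gt0; lra.
Qed.

Lemma g_relE x y : g_rel m c x y = Num.sqrt (s_inv m c x y - 4 * (m * c) ^+ 2).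
Proof.
rewrite /g_rel /s_inv norm2B norm2D sqrrB sqrrD !energy_sqr; congr Num.sqrt; ring.
Qed.

Lemma s_inv_conserved x y (x' y' : 'cV[R]_d) :
  x + y = x' + y' -> energy x + energy y = energy x' + energy y' ->
  s_inv m c x y = s_inv m c x' y'.
Proof. by rewrite /s_inv => -> ->. Qed.

Lemma energy_split x y (E := energy x + energy y) :
  energy x = E / 2 + dotv (x + y) (2^-1 *: (x - y)) / E /\
  energy y = E / 2 - dotv (x + y) (2^-1 *: (x - y)) / E.
Proof.
have E0 : E != 0 by rewrite gt_eqF ?addr_gt0 ?energy_gt0.
have diffE : dotv (x + y) (x - y) = (energy x - energy y) * E.
  by rewrite dotvDB -subr_sqr !energy_sqr; ring.
rewrite dotvZr diffE; split; rewrite /E; field; exact: E0.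
Qed.

End Kinematics.

Section Boost.
Variables (R : rcfType) (d : nat).

(* The spatial part of the Lorentz boost with velocity P/E and Lorentz factor E/r. *)
Definition boost (E r : R) (P : 'cV[R]_d) : 'M[R]_d :=
  let v := E^-1 *: P in
  1%:M + (if v == 0 then 0 else ((E / r - 1) / norm2 v) *: (v *m v^T)).

Lemma LambdaE m c (p ps : 'cV[R]_d) :
  Lambda m c p ps =
  boost (energy m c p + energy m c ps) (Num.sqrt (s_inv m c p ps)) (p + ps).
Proof. by []. Qed.

Lemma boost_preimage (E r : R) (P q : 'cV[R]_d) :
  E != 0 -> r != 0 -> r ^+ 2 = E ^+ 2 - norm2 P ->
  exists w, [/\ boost E r P *m w = q,
                norm2 w = norm2 q - (dotv P q / E) ^+ 2
              & dotv (r^-1 *: P) w = dotv P q / E].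
Proof.
move=> E0 r0 r2; have [->|P0] := eqVneq P 0.
  exists q; rewrite /boost scaler0 eqxx addr0 mul1mx.
  by rewrite !dotv0l mul0r expr0n subr0 scaler0 dotv0l.
have P2_0 : norm2 P != 0 by rewrite norm2_eq0.
have /negbTE v0 : E^-1 *: P != 0 by rewrite scaler_eq0 invr_eq0 negb_or E0.
exists (q + ((r / E - 1) * dotv P q / norm2 P) *: P); split.
- rewrite /boost v0 mulmxDl mul1mx -scalemxAl mul_outer_mx.
  rewrite norm2Z !(dotvZl, dotvDr, dotvZr) -/(norm2 P) !scalerA -addrA -scalerDl.
  rewrite [X in q + X *: P](_ : _ = 0) ?scale0r ?addr0 //.
  by field; rewrite E0 r0 P2_0.
- have P2E : norm2 P = E ^+ 2 - r ^+ 2 by rewrite r2; ring.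
  rewrite norm2D norm2Z dotvZr (dotvC q P) P2E.
  by field; rewrite -P2E P2_0 E0.
- rewrite dotvZl dotvDr dotvZr -/(norm2 P).
  by field; rewrite E0 r0 P2_0.
Qed.

End Boost.

Theorem propositionA2 (R : rcfType) (d : nat) (hd : (1 <= d)%N) (m c : R)
  (hm : 0 < m) (hc : 0 < c) (p ps hp hps : 'cV[R]_d) :
  p + ps = hp + hps ->
  energy m c p + energy m c ps = energy m c hp + energy m c hps ->
  exists omega : 'cV[R]_d,
    norm2 omega = 1 /\
    hp = 2^-1 *: (p + ps) + (g_rel m c p ps / 2) *: (Lambda m c p ps *m omega) /\
    hps = 2^-1 *: (p + ps) - (g_rel m c p ps / 2) *: (Lambda m c p ps *m omega) /\
    energy m c hp = (energy m c p + energy m c ps) / 2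
       + g_rel m c p ps / 2 * dotv ((Num.sqrt (s_inv m c p ps))^-1 *: (p + ps)) omega /\
    energy m c hps = (energy m c p + energy m c ps) / 2
       - g_rel m c p ps / 2 * dotv ((Num.sqrt (s_inv m c p ps))^-1 *: (p + ps)) omega.
Proof.
move=> momentum energy_cons.
have mc_gt0 := mulr_gt0 hm hc.
have s_out := s_inv_conserved momentum energy_cons.
have [e1 e2] := energy_split mc_gt0 hp hps.
rewrite LambdaE g_relE s_out -g_relE momentum energy_cons.
set P := hp + hps in e1 e2 *; set E := _ + energy m c hps in e1 e2 *.
set r := Num.sqrt _; set q := 2^-1 *: (hp - hps) in e1 e2.
have E0 : E != 0 by rewrite gt_eqF ?addr_gt0 ?energy_gt0.
have r0 : r != 0 by rewrite gt_eqF ?sqrtr_gt0 ?s_inv_gt0.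
have r2 : r ^+ 2 = E ^+ 2 - norm2 P by rewrite sqr_sqrtr ?ltW ?s_inv_gt0.
have [w [Lw w2 Pw]] := boost_preimage q E0 r0 r2.
have gw : g_rel m c hp hps / 2 = normv w.
  rewrite /g_rel e1 e2 (_ : hp - hps = 2 *: q); last first.
    by rewrite scalerA divff ?scale1r ?pnatr_eq0.
  rewrite norm2Z (_ : _ - _ = 2 ^+ 2 * norm2 w); last by rewrite w2; ring.
  by rewrite sqrtrM ?sqr_ge0 // sqrtr_sqr ger0_norm // mulrC mulKf ?pnatr_eq0.
have [o [o1 wo]] := normv_scale_unit w hd.
exists o; rewrite gw scalemxAr -wo Lw -dotvZr -wo Pw -e1 -e2.
by have [hpE hpsE] := half_sum_diff hp hps; rewrite -hpE -hpsE.
Qed.
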